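(* Let $n\ge 1$ be an integer and let $a_i(x)$, $0\le i\le n-1$, be real continuous functions on an open interval $I=(a,b)$. Then there exists a solution $y$ on $I$ of the linear ordinary differential equation $$y^{(n)}+a_{n-1}(x)\,y^{(n-1)}+\cdots+a_0(x)\,y=0$$ such that $y, y', \ldots, y^{(n-1)}$ are linearly independent over $I$.
   Context: Linear independence over $I$ means that no nontrivial real linear combination of the functions vanishes identically on $I$. *)

From Stdlib Require Import Reals.
From Coquelicot Require Import Coquelicot.
Open Scope R_scope.

Fixpoint sum_lt (n : nat) (f : nat -> R) : R :=
  match n with
  | O => 0
  | S m => sum_lt m f + f m
  end.

Definition in_interval (a b : Rbar) (x : R) : Prop :=
  Rbar_lt a x /\ Rbar_lt x b.

Definition n_times_differentiable_on (n : nat) (a b : Rbar) (y : R -> R) : Prop :=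
  forall k : nat, (k < n)%nat ->
    forall x : R, in_interval a b x -> ex_derive (Derive_n y k) x.

Definition is_solution (n : nat) (coef : nat -> R -> R) (a b : Rbar) (y : R -> R) : Prop :=
  n_times_differentiable_on n a b y /\
  forall x : R, in_interval a b x ->
    Derive_n y n x + sum_lt n (fun i => coef i x * Derive_n y i x) = 0.

Definition lin_indep_on (n : nat) (f : nat -> R -> R) (a b : Rbar) : Prop :=
  forall c : nat -> R,
    (forall x : R, in_interval a b x -> sum_lt n (fun i => c i * f i x) = 0) ->
    forall i : nat, (i < n)%nat -> c i = 0.

(* Reduce the equation to the first-order system [Y' = C(x) Y] with the companion
   matrix [C] and solve it on the whole interval by Picard iteration from [x0]: on every
   compact subinterval the iterates differ by at most [B (L |x - x0|)^k / k!], so they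
   converge locally uniformly, together with their derivatives.  The initial data
   [y^(k)(x0) = delta_(k,n-1)] make [y, ..., y^(n-1)] independent: in a vanishing
   combination, evaluation at [x0] kills the top coefficient and differentiation then
   exposes the next one. *)

From Stdlib Require Import Reals Lra Lia.
From Coquelicot Require Import Coquelicot.
Open Scope R_scope.

Lemma in_interval_convex (a b : Rbar) (u v w : R) :
  in_interval a b u -> in_interval a b w -> u <= v <= w -> in_interval a b v.
Proof. unfold in_interval; destruct a, b; simpl; intros; lra. Qed.

Lemma in_interval_nonempty (a b : Rbar) : Rbar_lt a b -> exists x, in_interval a b x.
Proof.
  unfold in_interval; destruct a as [ra| |], b as [rb| |]; simpl; intros H;
    try contradiction.
  - exists ((ra + rb) / 2); lra.
  - exists (ra + 1); lra.
  - exists (rb - 1); lra.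
  - exists 0; tauto.
Qed.

Lemma in_interval_Rmin (a b : Rbar) (u v : R) :
  in_interval a b u -> in_interval a b v -> in_interval a b (Rmin u v).
Proof. unfold Rmin; destruct (Rle_dec u v); auto. Qed.

Lemma in_interval_Rmax (a b : Rbar) (u v : R) :
  in_interval a b u -> in_interval a b v -> in_interval a b (Rmax u v).
Proof. unfold Rmax; destruct (Rle_dec u v); auto. Qed.

Lemma in_interval_locally (a b : Rbar) (x : R) :
  in_interval a b x -> locally x (in_interval a b).
Proof.
  intros [Hax Hxb]. apply (locally_interval _ x a b Hax Hxb).
  intros y Hay Hyb; split; assumption.
Qed.

Lemma in_interval_ball (a b : Rbar) (x : R) : in_interval a b x ->
  exists d : posreal, in_interval a b (x - d) /\ in_interval a b (x + d).
Proof.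
  intros Hx. destruct (in_interval_locally a b x Hx) as [e He].
  exists (pos_div_2 e). destruct e as [e e_pos]; simpl.
  split; apply He.
  - change (Rabs (x - e / 2 - x) < e). rewrite Rabs_left; lra.
  - change (Rabs (x + e / 2 - x) < e). rewrite Rabs_pos_eq; lra.
Qed.

Lemma sum_lt_ext (m : nat) (f g : nat -> R) :
  (forall k, (k < m)%nat -> f k = g k) -> sum_lt m f = sum_lt m g.
Proof.
  induction m as [|m IH]; intros H; simpl; [reflexivity|].
  rewrite IH by (intros; apply H; lia). rewrite H by lia. reflexivity.
Qed.

Lemma sum_lt_Rabs (m : nat) (f : nat -> R) :
  Rabs (sum_lt m f) <= sum_lt m (fun k => Rabs (f k)).
Proof.
  induction m as [|m IH]; simpl.
  - rewrite Rabs_R0; lra.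
  - eapply Rle_trans; [apply Rabs_triang | lra].
Qed.

Lemma sum_lt_le (m : nat) (f g : nat -> R) :
  (forall k, (k < m)%nat -> f k <= g k) -> sum_lt m f <= sum_lt m g.
Proof.
  induction m as [|m IH]; intros H; simpl; [lra|].
  apply Rplus_le_compat; [apply IH; intros; apply H | apply H]; lia.
Qed.

Lemma sum_lt_mult_r (m : nat) (f : nat -> R) (c : R) :
  sum_lt m (fun k => f k * c) = sum_lt m f * c.
Proof. induction m as [|m IH]; simpl; [ring | rewrite IH; ring]. Qed.

Lemma sum_lt_minus (m : nat) (f g : nat -> R) :
  sum_lt m (fun k => f k - g k) = sum_lt m f - sum_lt m g.
Proof. induction m as [|m IH]; simpl; [ring | rewrite IH; ring]. Qed.

Lemma sum_lt_delta (m p : nat) (f : nat -> R) :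
  sum_lt m (fun k => (if Nat.eqb k p then 1 else 0) * f k) =
  if Nat.ltb p m then f p else 0.
Proof.
  induction m as [|m IH]; simpl; [reflexivity|]. rewrite IH.
  destruct (Nat.eqb_spec m p) as [->|Hmp].
  - rewrite Nat.ltb_irrefl. replace (Nat.ltb p (S p)) with true
      by (symmetry; apply Nat.ltb_lt; lia). ring.
  - destruct (Nat.ltb_spec p m), (Nat.ltb_spec p (S m)); try lia; ring.
Qed.

Lemma continuous_sum_lt (m : nat) (f : nat -> R -> R) (x : R) :
  (forall k, (k < m)%nat -> continuous (f k) x) ->
  continuous (fun t => sum_lt m (fun k => f k t)) x.
Proof.
  induction m as [|m IH]; intros H; simpl.
  - apply continuous_const.
  - apply (continuous_plus (fun t => sum_lt m (fun k => f k t)) (f m));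
      [apply IH; intros; apply H | apply H]; lia.
Qed.

Lemma is_derive_sum_lt (m : nat) (f : nat -> R -> R) (df : nat -> R) (x : R) :
  (forall k, (k < m)%nat -> is_derive (f k) x (df k)) ->
  is_derive (fun t => sum_lt m (fun k => f k t)) x (sum_lt m df).
Proof.
  induction m as [|m IH]; intros H; simpl.
  - apply (@is_derive_const R_AbsRing R_NormedModule).
  - apply (is_derive_plus (K := R_AbsRing) (V := R_NormedModule)
             (fun t => sum_lt m (fun k => f k t)) (f m));
      [apply IH; intros; apply H | apply H]; lia.
Qed.

Lemma is_lim_seq_sum_lt (m : nat) (u : nat -> nat -> R) (l : nat -> R) :
  (forall k, (k < m)%nat -> is_lim_seq (fun p => u p k) (l k)) ->
  is_lim_seq (fun p => sum_lt m (u p)) (sum_lt m l).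
Proof.
  induction m as [|m IH]; intros H; simpl.
  - apply is_lim_seq_const.
  - apply (is_lim_seq_plus' (fun p => sum_lt m (u p)) (fun p => u p m));
      [apply IH; intros; apply H | apply H]; lia.
Qed.

Lemma continuous_family_bounded (m : nat) (f : nat -> R -> R) (lo hi : R) :
  lo <= hi ->
  (forall k, (k < m)%nat -> forall s, lo <= s <= hi -> continuous (f k) s) ->
  exists M, 0 <= M /\ forall k, (k < m)%nat -> forall s, lo <= s <= hi -> Rabs (f k s) <= M.
Proof.
  intros Hlh. induction m as [|m IH]; intros Hf.
  - exists 0. split; [lra | intros; lia].
  - destruct IH as [M [HM Hbound]]; [intros; apply Hf; auto; lia|].
    destruct (continuity_ab_maj (fun s => Rabs (f m s)) lo hi Hlh) as [s_max [Hmax _]].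
    { intros s Hs. apply continuity_pt_filterlim, continuous_Rabs_comp, Hf; auto. }
    exists (Rmax M (Rabs (f m s_max))). split; [eapply Rle_trans; [apply HM | apply Rmax_l]|].
    intros k Hk s Hs. destruct (Nat.eq_dec k m) as [->|Hkm].
    + eapply Rle_trans; [apply Hmax; auto | apply Rmax_r].
    + eapply Rle_trans; [apply Hbound; auto; lia | apply Rmax_l].
Qed.

Definition exp_term (c : R) (k : nat) : R := / INR (Factorial.fact k) * c ^ k.

Lemma exp_term_nonneg (c : R) (k : nat) : 0 <= c -> 0 <= exp_term c k.
Proof.
  intros Hc. apply Rmult_le_pos; [|apply pow_le; exact Hc].
  apply Rlt_le, Rinv_0_lt_compat, lt_0_INR, Factorial.lt_O_fact.
Qed.

Lemma CVU_cauchy_exp_bound (f : nat -> R -> R) (D : R -> Prop) (K c : R) :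
  0 <= K ->
  (forall k x, D x -> Rabs (f (S k) x - f k x) <= K * exp_term c (S k)) ->
  CVU_cauchy f D.
Proof.
  intros HK Hstep.
  assert (Htele : forall p d x, D x -> Rabs (f (p + d)%nat x - f p x) <=
            K * (sum_f_R0 (exp_term c) (p + d) - sum_f_R0 (exp_term c) p)).
  { intros p d x Hx. induction d as [|d IH].
    - rewrite Nat.add_0_r, !Rminus_diag, Rabs_R0. lra.
    - rewrite Nat.add_succ_r. cbn [sum_f_R0].
      specialize (Hstep (p + d)%nat x Hx).
      replace (f (S (p + d)) x - f p x) with
        ((f (S (p + d)) x - f (p + d)%nat x) + (f (p + d)%nat x - f p x)) by ring.
      eapply Rle_trans; [apply Rabs_triang | lra]. }
  intros eps.
  assert (Heps : 0 < eps / (K + 1)) by (apply Rdiv_lt_0_compat; [apply cond_pos | lra]).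
  destruct (CV_Cauchy _ (exist_exp c) (eps / (K + 1)) Heps) as [N HN].
  exists N.
  assert (Hmono : forall p q x, D x -> (N <= p <= q)%nat -> Rabs (f q x - f p x) < eps).
  { intros p q x Hx Hpq. replace q with (p + (q - p))%nat by lia.
    eapply Rle_lt_trans; [apply Htele; exact Hx|].
    specialize (HN (p + (q - p))%nat p ltac:(lia) ltac:(lia)).
    change (R_dist (sum_f_R0 (exp_term c) (p + (q - p))) (sum_f_R0 (exp_term c) p)
      < eps / (K + 1)) in HN. unfold R_dist in HN.
    apply Rle_lt_trans with (K * (eps / (K + 1))).
    - apply Rmult_le_compat_l; [exact HK | eapply Rle_trans; [apply Rle_abs | lra]].
    - apply Rlt_le_trans with ((K + 1) * (eps / (K + 1))); [|right; field; lra].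
      apply Rmult_lt_compat_r; [exact Heps | lra]. }
  intros p q x Hx Hp Hq. destruct (Nat.le_ge_cases p q).
  - rewrite Rabs_minus_sym. apply Hmono; [exact Hx | lia].
  - apply Hmono; [exact Hx | lia].
Qed.

Lemma is_RInt_pow_shift (x0 x : R) (m : nat) :
  is_RInt (fun s => (s - x0) ^ m) x0 x ((x - x0) ^ S m / INR (S m)).
Proof.
  assert (Hm : INR (S m) <> 0) by (apply not_0_INR; lia).
  set (G := fun s => (s - x0) ^ S m / INR (S m)).
  replace ((x - x0) ^ S m / INR (S m)) with (minus (G x) (G x0))
    by (unfold G, minus, plus, opp; simpl; rewrite Rminus_diag; field; exact Hm).
  apply (is_RInt_derive (V := R_CompleteNormedModule) G).
  - intros s _. unfold G. auto_derive; [exact I|].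
    change (match m with 0%nat => 1 | S _ => INR m + 1 end) with (INR (S m)).
    unfold Rminus. field. exact Hm.
  - intros t _. apply (@ex_derive_continuous R_AbsRing R_NormedModule).
    auto_derive. exact I.
Qed.

Lemma abs_RInt_le_pow_ge (f : R -> R) (x0 x K : R) (m : nat) : x0 <= x ->
  (forall s, x0 <= s <= x -> continuous f s) ->
  (forall s, x0 <= s <= x -> Rabs (f s) <= K * (s - x0) ^ m) ->
  Rabs (RInt f x0 x) <= K * (x - x0) ^ S m / INR (S m).
Proof.
  intros Hle Hcont Hbound.
  assert (Hseg : forall s, Rmin x0 x <= s <= Rmax x0 x -> x0 <= s <= x)
    by (rewrite Rmin_left, Rmax_right by exact Hle; auto).
  assert (Hpoly : is_RInt (fun s => K * (s - x0) ^ m) x0 x (K * ((x - x0) ^ S m / INR (S m))))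
    by apply (is_RInt_scal _ _ _ K _ (is_RInt_pow_shift x0 x m)).
  eapply Rle_trans; [apply abs_RInt_le; [exact Hle|]|].
  - apply (ex_RInt_continuous (V := R_CompleteNormedModule)); auto.
  - replace (K * (x - x0) ^ S m / INR (S m)) with (K * ((x - x0) ^ S m / INR (S m)))
      by (unfold Rdiv; ring).
    rewrite <- (is_RInt_unique _ _ _ _ Hpoly).
    apply RInt_le; [exact Hle | | eexists; exact Hpoly | intros s Hs; apply Hbound; lra].
    apply (ex_RInt_continuous (V := R_CompleteNormedModule)).
    intros s Hs. apply continuous_Rabs_comp, Hcont; auto.
Qed.

(* The case [x < x0] reduces to [abs_RInt_le_pow_ge] by the reflection [s |-> -s]. *)
Lemma abs_RInt_le_pow (f : R -> R) (x0 x K : R) (m : nat) :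
  (forall s, Rmin x0 x <= s <= Rmax x0 x -> continuous f s) ->
  (forall s, Rmin x0 x <= s <= Rmax x0 x -> Rabs (f s) <= K * Rabs (s - x0) ^ m) ->
  Rabs (RInt f x0 x) <= K * Rabs (x - x0) ^ S m / INR (S m).
Proof.
  intros Hcont Hbound. destruct (Rle_lt_dec x0 x) as [Hle|Hlt].
  - rewrite Rmin_left, Rmax_right in Hcont, Hbound by exact Hle.
    rewrite (Rabs_pos_eq (x - x0)) by lra. apply abs_RInt_le_pow_ge; [exact Hle | exact Hcont |].
    intros s Hs. specialize (Hbound s Hs). rewrite (Rabs_pos_eq (s - x0)) in Hbound by lra.
    exact Hbound.
  - rewrite Rmin_right, Rmax_left in Hcont, Hbound by lra.
    assert (Hrefl : RInt f x0 x = RInt (fun u => - f (- u)) (- x0) (- x)).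
    { symmetry. apply is_RInt_unique.
      apply (is_RInt_comp_opp (V := R_NormedModule) f). rewrite !Ropp_involutive.
      apply (RInt_correct (V := R_CompleteNormedModule)).
      apply (ex_RInt_continuous (V := R_CompleteNormedModule)).
      rewrite Rmin_right, Rmax_left by lra. exact Hcont. }
    rewrite Hrefl, (Rabs_left (x - x0)) by lra.
    replace (- (x - x0)) with (- x - - x0) by ring.
    apply abs_RInt_le_pow_ge; [lra | |]; intros s Hs.
    + apply (continuous_opp (fun u => f (- u))).
      apply (continuous_comp Ropp f);
        [apply (continuous_opp (V := R_NormedModule) (fun u => u)), continuous_id
        | apply Hcont; lra].
    + rewrite Rabs_Ropp. specialize (Hbound (- s) ltac:(lra)).
      rewrite (Rabs_left1 (- s - x0)) in Hbound by lra.
      replace (s - - x0) with (- (- s - x0)) by ring. exact Hbound.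
Qed.

Lemma is_derive_lim_seq (f f' : nat -> R -> R) (g : R -> R) (x : R) (d : posreal) :
  CVU_cauchy f' (Boule x d) ->
  (forall y, Boule x d y -> is_lim_seq (fun k => f k y) (g y)) ->
  (forall k y, Boule x d y -> is_derive (f k) y (f' k y)) ->
  is_derive g x (real (Lim_seq (fun k => f' k x))).
Proof.
  intros Hcvu Hlim Hder. apply CVU_dom_cauchy in Hcvu.
  apply is_derive_Reals.
  apply (CVU_derivable f f' g (fun y => real (Lim_seq (fun k => f' k y))) x d).
  - apply CVU_dom_Reals; [|exact Hcvu].
    intros y Hy. destruct (CVU_CVS_dom _ _ Hcvu y Hy) as [l Hl].
    rewrite (is_lim_seq_unique _ _ Hl). reflexivity.
  - intros y Hy. apply is_lim_seq_Reals, Hlim, Hy.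
  - intros k y Hy. apply is_derive_Reals, Hder, Hy.
  - unfold Boule. rewrite Rminus_diag, Rabs_R0. apply cond_pos.
Qed.

Lemma Rmin_Rmax_segment (lo hi u v s : R) : lo <= u <= hi -> lo <= v <= hi ->
  Rmin u v <= s <= Rmax u v -> lo <= s <= hi.
Proof. unfold Rmin, Rmax; destruct (Rle_dec u v); lra. Qed.

Lemma ex_RInt_in_interval (a b : Rbar) (f : R -> R) (u v : R) :
  (forall s, in_interval a b s -> continuous f s) ->
  in_interval a b u -> in_interval a b v -> ex_RInt f u v.
Proof.
  intros Hf Hu Hv. apply (ex_RInt_continuous (V := R_CompleteNormedModule)).
  intros s Hs. apply Hf, (in_interval_convex a b (Rmin u v) s (Rmax u v)); [| |exact Hs].
  - apply in_interval_Rmin; assumption.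
  - apply in_interval_Rmax; assumption.
Qed.

Section LinearSystem.

Variables (n : nat) (A : nat -> nat -> R -> R) (a b : Rbar) (x0 : R) (Y0 : nat -> R).
Hypothesis Hx0 : in_interval a b x0.
Hypothesis HA : forall i j, (i < n)%nat -> (j < n)%nat ->
  forall x, in_interval a b x -> continuous (A i j) x.

Definition lin_field (Y : nat -> R -> R) (i : nat) (x : R) : R :=
  sum_lt n (fun j => A i j x * Y j x).

Fixpoint picard (k : nat) : nat -> R -> R :=
  match k with
  | O => fun i _ => Y0 i
  | S k => fun i x => Y0 i + RInt (lin_field (picard k) i) x0 x
  end.

Lemma continuous_lin_field (Y : nat -> R -> R) (x : R) : in_interval a b x ->
  (forall j, (j < n)%nat -> continuous (Y j) x) ->
  forall i, (i < n)%nat -> continuous (lin_field Y i) x.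
Proof.
  intros Hx HY i Hi. apply continuous_sum_lt. intros j Hj.
  apply (continuous_mult (A i j) (Y j)); auto.
Qed.

Lemma lin_field_minus (g h : nat -> R -> R) (i : nat) (x : R) :
  lin_field g i x - lin_field h i x = lin_field (fun j t => g j t - h j t) i x.
Proof.
  unfold lin_field. rewrite <- sum_lt_minus. apply sum_lt_ext. intros; ring.
Qed.

Lemma Rabs_lin_field_le (Y : nat -> R -> R) (i : nat) (x L beta : R) : 0 <= beta ->
  sum_lt n (fun j => Rabs (A i j x)) <= L ->
  (forall j, (j < n)%nat -> Rabs (Y j x) <= beta) ->
  Rabs (lin_field Y i x) <= L * beta.
Proof.
  intros Hbeta HL HY. eapply Rle_trans; [apply sum_lt_Rabs|].
  eapply Rle_trans; [|apply Rmult_le_compat_r; [exact Hbeta | exact HL]].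
  rewrite <- sum_lt_mult_r. apply sum_lt_le. intros j Hj.
  rewrite Rabs_mult. apply Rmult_le_compat_l; [apply Rabs_pos | auto].
Qed.

Lemma is_derive_picard_step (Y : nat -> R -> R) :
  (forall j, (j < n)%nat -> forall s, in_interval a b s -> continuous (Y j) s) ->
  forall i, (i < n)%nat -> forall x, in_interval a b x ->
    is_derive (fun t => Y0 i + RInt (lin_field Y i) x0 t) x (lin_field Y i x).
Proof.
  intros HY i Hi x Hx.
  assert (Hcont : forall s, in_interval a b s -> continuous (lin_field Y i) s)
    by (intros s Hs; apply continuous_lin_field; auto).
  replace (lin_field Y i x) with (plus 0 (lin_field Y i x)) by (unfold plus; simpl; ring).
  apply (is_derive_plus (fun _ => Y0 i) (fun t => RInt (lin_field Y i) x0 t)).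
  - apply (@is_derive_const R_AbsRing R_NormedModule).
  - apply (is_derive_RInt (V := R_CompleteNormedModule) _ _ x0); [|apply Hcont, Hx].
    apply (filter_imp (in_interval a b)); [|apply in_interval_locally, Hx].
    intros t Ht. apply RInt_correct, (ex_RInt_in_interval a b); assumption.
Qed.

Lemma continuous_picard (k : nat) :
  forall j, (j < n)%nat -> forall s, in_interval a b s -> continuous (picard k j) s.
Proof.
  induction k as [|k IH]; intros j Hj s Hs.
  - apply continuous_const.
  - apply (@ex_derive_continuous R_AbsRing R_NormedModule).
    eexists. apply is_derive_picard_step; auto.
Qed.

Lemma is_derive_picard (k i : nat) (x : R) : (i < n)%nat -> in_interval a b x ->
  is_derive (picard (S k) i) x (lin_field (picard k) i x).
Proof. intros Hi Hx. apply is_derive_picard_step; auto. apply continuous_picard. Qed.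

Section PicardBounds.

Variables (lo hi L B : R).
Hypotheses (Hlo : in_interval a b lo) (Hhi : in_interval a b hi) (Hx0_seg : lo <= x0 <= hi).
Hypotheses (HL : 0 <= L) (HB : 0 <= B).
Hypothesis HrowL : forall i, (i < n)%nat -> forall s, lo <= s <= hi ->
  sum_lt n (fun j => Rabs (A i j s)) <= L.
Hypothesis HY0 : forall j, (j < n)%nat -> Rabs (Y0 j) <= B.

Lemma abs_RInt_lin_field_le (g : nat -> R -> R) (C : R) (m i : nat) (x : R) :
  (i < n)%nat -> lo <= x <= hi -> 0 <= C ->
  (forall j, (j < n)%nat -> forall s, lo <= s <= hi -> continuous (g j) s) ->
  (forall j, (j < n)%nat -> forall s, lo <= s <= hi -> Rabs (g j s) <= C * Rabs (s - x0) ^ m) ->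
  Rabs (RInt (lin_field g i) x0 x) <= L * C * Rabs (x - x0) ^ S m / INR (S m).
Proof.
  intros Hi Hx HC Hcont Hbound.
  assert (Hseg : forall s, Rmin x0 x <= s <= Rmax x0 x -> lo <= s <= hi)
    by (intros s Hs; apply (Rmin_Rmax_segment lo hi x0 x s); auto).
  apply abs_RInt_le_pow; intros s Hs; specialize (Hseg s Hs).
  - apply continuous_lin_field; [apply (in_interval_convex a b lo s hi); auto | |exact Hi].
    intros j Hj. apply Hcont; auto.
  - rewrite Rmult_assoc. apply Rabs_lin_field_le; auto.
    apply Rmult_le_pos; [exact HC | apply pow_le, Rabs_pos].
Qed.

Lemma picard_step_bound (k i : nat) (x : R) : (i < n)%nat -> lo <= x <= hi ->
  Rabs (picard (S k) i x - picard k i x) <=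
    B * L ^ S k * Rabs (x - x0) ^ S k / INR (Factorial.fact (S k)).
Proof.
  assert (Hin : forall s, lo <= s <= hi -> in_interval a b s)
    by (intros s Hs; apply (in_interval_convex a b lo s hi); auto).
  revert i x. induction k as [|k IH]; intros i x Hi Hx.
  - cbn [picard]. rewrite Rplus_minus_l.
    replace (B * L ^ 1 * Rabs (x - x0) ^ 1 / INR (Factorial.fact 1))
      with (L * B * Rabs (x - x0) ^ 1 / INR 1) by (simpl; field).
    apply abs_RInt_lin_field_le; auto.
    + intros j Hj s Hs. apply continuous_const.
    + intros j Hj s Hs. rewrite pow_O, Rmult_1_r. auto.
  - set (C := B * L ^ S k / INR (Factorial.fact (S k))).
    assert (Hfact : INR (Factorial.fact (S k)) <> 0)
      by (apply not_0_INR, Nat.neq_0_lt_0, Factorial.lt_O_fact).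
    assert (HC : 0 <= C).
    { apply Rmult_le_pos; [apply Rmult_le_pos; [exact HB | apply pow_le, HL]|].
      apply Rlt_le, Rinv_0_lt_compat, lt_0_INR, Factorial.lt_O_fact. }
    replace (B * L ^ S (S k) * Rabs (x - x0) ^ S (S k) / INR (Factorial.fact (S (S k))))
      with (L * C * Rabs (x - x0) ^ S (S k) / INR (S (S k))).
    2:{ unfold C. change (Factorial.fact (S (S k))) with (S (S k) * Factorial.fact (S k))%nat.
        rewrite mult_INR. simpl pow. field. split; [exact Hfact | apply not_0_INR; lia]. }
    change (picard (S (S k)) i x - picard (S k) i x) with
      ((Y0 i + RInt (lin_field (picard (S k)) i) x0 x) -
       (Y0 i + RInt (lin_field (picard k) i) x0 x)).
    rewrite Rminus_plus_l_l.
    replace (RInt (lin_field (picard (S k)) i) x0 x - RInt (lin_field (picard k) i) x0 x)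
      with (minus (RInt (lin_field (picard (S k)) i) x0 x) (RInt (lin_field (picard k) i) x0 x))
      by reflexivity.
    rewrite <- RInt_minus by (apply ex_RInt_in_interval with a b; auto;
      intros s Hs; apply continuous_lin_field;
      [exact Hs | intros j Hj; apply continuous_picard; auto | exact Hi]).
    rewrite (RInt_ext _ (lin_field (fun j t => picard (S k) j t - picard k j t) i))
      by (intros; apply lin_field_minus).
    apply abs_RInt_lin_field_le; auto.
    + intros j Hj s Hs. apply (continuous_minus (V := R_NormedModule));
        apply continuous_picard; auto.
    + intros j Hj s Hs. eapply Rle_trans; [apply IH; auto|].
      right. unfold C. field. exact Hfact.
Qed.

Lemma picard_step_exp_bound (k i : nat) (x : R) : (i < n)%nat -> lo <= x <= hi ->
  Rabs (picard (S k) i x - picard k i x) <= B * exp_term (L * (hi - lo)) (S k).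
Proof.
  intros Hi Hx. eapply Rle_trans; [apply picard_step_bound; assumption|].
  unfold exp_term. rewrite Rpow_mult_distr.
  replace (B * L ^ S k * Rabs (x - x0) ^ S k / INR (Factorial.fact (S k))) with
    (B * (/ INR (Factorial.fact (S k)) * (L ^ S k * Rabs (x - x0) ^ S k)))
    by (unfold Rdiv; ring).
  apply Rmult_le_compat_l; [exact HB|].
  apply Rmult_le_compat_l; [apply Rlt_le, Rinv_0_lt_compat, lt_0_INR, Factorial.lt_O_fact|].
  apply Rmult_le_compat_l; [apply pow_le, HL|].
  apply pow_incr. split; [apply Rabs_pos|].
  unfold Rabs; destruct (Rcase_abs (x - x0)); lra.
Qed.

Lemma lin_field_picard_step_exp_bound (k i : nat) (x : R) : (i < n)%nat -> lo <= x <= hi ->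
  Rabs (lin_field (picard (S k)) i x - lin_field (picard k) i x) <=
    L * (B * exp_term (L * (hi - lo)) (S k)).
Proof.
  intros Hi Hx. rewrite lin_field_minus. apply Rabs_lin_field_le.
  - apply Rmult_le_pos; [exact HB | apply exp_term_nonneg, Rmult_le_pos; [exact HL | lra]].
  - apply HrowL; assumption.
  - intros j Hj. apply picard_step_exp_bound; assumption.
Qed.

End PicardBounds.

Lemma picard_locally_uniformly_cauchy (x : R) : in_interval a b x ->
  exists d : posreal, (forall y, Boule x d y -> in_interval a b y) /\
    forall i, (i < n)%nat ->
      CVU_cauchy (fun k => picard k i) (Boule x d) /\
      CVU_cauchy (fun k => lin_field (picard k) i) (Boule x d).
Proof.
  intros Hx. destruct (in_interval_ball a b x Hx) as [d [Hxm Hxp]].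
  set (lo := Rmin x0 (x - d)). set (hi := Rmax x0 (x + d)).
  assert (Hlo : in_interval a b lo) by (apply in_interval_Rmin; assumption).
  assert (Hhi : in_interval a b hi) by (apply in_interval_Rmax; assumption).
  assert (Hlo_le : lo <= x0 /\ lo <= x - d) by (split; [apply Rmin_l | apply Rmin_r]).
  assert (Hhi_ge : x0 <= hi /\ x + d <= hi) by (split; [apply Rmax_l | apply Rmax_r]).
  assert (Hin : forall s, lo <= s <= hi -> in_interval a b s)
    by (intros s Hs; apply (in_interval_convex a b lo s hi); auto).
  assert (Hball : forall y, Boule x d y -> lo <= y <= hi)
    by (intros y Hy; unfold Boule in Hy; apply Rabs_def2 in Hy; lra).
  destruct (continuous_family_bounded n (fun i s => sum_lt n (fun j => Rabs (A i j s))) lo hi)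
    as [L [HL HrowL_abs]]; [lra| |].
  { intros i Hi s Hs. apply continuous_sum_lt. intros j Hj.
    apply continuous_Rabs_comp, HA; auto. }
  destruct (continuous_family_bounded n (fun j _ => Y0 j) lo hi) as [B [HB HY0_const]]; [lra| |].
  { intros j Hj s Hs. apply continuous_const. }
  assert (HrowL : forall i, (i < n)%nat -> forall s, lo <= s <= hi ->
    sum_lt n (fun j => Rabs (A i j s)) <= L)
    by (intros i Hi s Hs; eapply Rle_trans; [apply Rle_abs | apply (HrowL_abs i Hi s Hs)]).
  assert (HY0 : forall j, (j < n)%nat -> Rabs (Y0 j) <= B)
    by (intros j Hj; apply (HY0_const j Hj x0); lra).
  assert (Hseg : lo <= x0 <= hi) by lra.
  exists d. split; [intros y Hy; apply Hin, Hball, Hy|].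
  intros i Hi. split.
  - apply (CVU_cauchy_exp_bound _ _ B (L * (hi - lo)) HB). intros k y Hy.
    apply (picard_step_exp_bound lo hi L B); auto.
  - apply (CVU_cauchy_exp_bound _ _ (L * B) (L * (hi - lo)));
      [apply Rmult_le_pos; assumption|].
    intros k y Hy. rewrite Rmult_assoc.
    apply (lin_field_picard_step_exp_bound lo hi L B); auto.
Qed.

Definition picard_limit (i : nat) (x : R) : R := real (Lim_seq (fun k => picard k i x)).

Lemma is_lim_seq_picard (i : nat) (x : R) : (i < n)%nat -> in_interval a b x ->
  is_lim_seq (fun k => picard k i x) (picard_limit i x).
Proof.
  intros Hi Hx. destruct (picard_locally_uniformly_cauchy x Hx) as [d [_ Hd]].
  destruct (Hd i Hi) as [Hcvu _]. apply CVU_dom_cauchy, CVU_CVS_dom in Hcvu.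
  destruct (Hcvu x) as [l Hl].
  { unfold Boule. rewrite Rminus_diag, Rabs_R0. apply cond_pos. }
  unfold picard_limit. rewrite (is_lim_seq_unique _ _ Hl). exact Hl.
Qed.

Lemma is_derive_picard_limit (i : nat) (x : R) : (i < n)%nat -> in_interval a b x ->
  is_derive (picard_limit i) x (lin_field picard_limit i x).
Proof.
  intros Hi Hx. destruct (picard_locally_uniformly_cauchy x Hx) as [d [Hball Hd]].
  assert (Hlim : is_lim_seq (fun k => lin_field (picard k) i x) (lin_field picard_limit i x)).
  { apply is_lim_seq_sum_lt. intros j Hj.
    apply (is_lim_seq_scal_l _ (A i j x) (picard_limit j x)), is_lim_seq_picard; auto. }
  replace (lin_field picard_limit i x)
    with (real (Lim_seq (fun k => lin_field (picard k) i x)))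
    by (rewrite (is_lim_seq_unique _ _ Hlim); reflexivity).
  apply (is_derive_lim_seq (fun k => picard (S k) i) (fun k => lin_field (picard k) i)
           (picard_limit i) x d); [apply Hd, Hi | |].
  - intros y Hy. apply (is_lim_seq_incr_1 (fun k => picard k i y)), is_lim_seq_picard; auto.
  - intros k y Hy. apply is_derive_picard; auto.
Qed.

Lemma picard_limit_initial (i : nat) : picard_limit i x0 = Y0 i.
Proof.
  unfold picard_limit. rewrite (Lim_seq_ext _ (fun _ => Y0 i)), Lim_seq_const; [reflexivity|].
  intros [|k]; simpl; [reflexivity|]. rewrite RInt_point. apply Rplus_0_r.
Qed.

Theorem linear_system_solution : exists Y : nat -> R -> R,
  (forall i, Y i x0 = Y0 i) /\
  forall i, (i < n)%nat -> forall x, in_interval a b x -> is_derive (Y i) x (lin_field Y i x).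
Proof.
  exists picard_limit. split; [exact picard_limit_initial|].
  intros i Hi x Hx. apply is_derive_picard_limit; assumption.
Qed.

End LinearSystem.

Lemma is_derive_vanishing_on_interval (a b : Rbar) (g : R -> R) (x l : R) :
  (forall t, in_interval a b t -> g t = 0) -> in_interval a b x ->
  is_derive g x l -> l = 0.
Proof.
  intros Hg Hx Hder. apply (is_derive_unique g x l) in Hder. rewrite <- Hder.
  apply is_derive_unique, (is_derive_ext_loc (fun _ => 0)).
  - apply (filter_imp (in_interval a b)); [|apply in_interval_locally, Hx].
    intros t Ht. symmetry. apply Hg, Ht.
  - apply (@is_derive_const R_AbsRing R_NormedModule).
Qed.

Section DerivativeChain.

Variables (a b : Rbar) (m : nat) (Y dY : nat -> R -> R).
Hypothesis HdY : forall k, (k < m)%nat -> forall x, in_interval a b x -> is_derive (Y k) x (dY k x).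
Hypothesis Hchain : forall k, (S k < m)%nat -> forall x, in_interval a b x -> dY k x = Y (S k) x.

Lemma Derive_n_chain (k : nat) : (k < m)%nat ->
  forall x, in_interval a b x -> Derive_n (Y 0) k x = Y k x.
Proof.
  induction k as [|k IH]; intros Hk x Hx; [reflexivity|].
  simpl. rewrite (Derive_ext_loc _ (Y k)).
  - rewrite <- Hchain by (lia || exact Hx). apply is_derive_unique, HdY; [lia | exact Hx].
  - apply (filter_imp (in_interval a b)); [|apply in_interval_locally, Hx].
    intros t Ht. apply IH; [lia | exact Ht].
Qed.

Lemma is_derive_Derive_n_chain (k : nat) : (k < m)%nat ->
  forall x, in_interval a b x -> is_derive (Derive_n (Y 0) k) x (dY k x).
Proof.
  intros Hk x Hx. apply (is_derive_ext_loc (Y k)); [|apply HdY; assumption].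
  apply (filter_imp (in_interval a b)); [|apply in_interval_locally, Hx].
  intros t Ht. symmetry. apply Derive_n_chain; assumption.
Qed.

End DerivativeChain.

(* Evaluating [sum_(k < n - t) c_k y^(k+t)] at [x0] isolates [c_(n-1-t)]; differentiating
   it shifts [t] by one. *)
Lemma lin_indep_derivatives (n : nat) (a b : Rbar) (y : R -> R) (x0 : R) :
  in_interval a b x0 ->
  (forall k, (S k < n)%nat -> forall x, in_interval a b x -> ex_derive (Derive_n y k) x) ->
  (forall k, (k < n)%nat -> Derive_n y k x0 = if Nat.eqb k (n - 1) then 1 else 0) ->
  lin_indep_on n (fun k => Derive_n y k) a b.
Proof.
  intros Hx0 Hder Hinit c Hsum.
  assert (Hat_x0 : forall t, (t < n)%nat ->
    sum_lt (n - t) (fun k => c k * Derive_n y (k + t) x0) = c (n - 1 - t)%nat).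
  { intros t Ht. rewrite (sum_lt_ext _ _ (fun k => (if Nat.eqb k (n - 1 - t) then 1 else 0) * c k)).
    - rewrite sum_lt_delta. destruct (Nat.ltb_spec (n - 1 - t) (n - t)); [reflexivity | lia].
    - intros k Hk. rewrite Hinit by lia.
      destruct (Nat.eqb_spec (k + t) (n - 1)), (Nat.eqb_spec k (n - 1 - t)); try lia; ring. }
  assert (Hshift : forall t, (t < n)%nat -> forall x, in_interval a b x ->
    sum_lt (n - t) (fun k => c k * Derive_n y (k + t) x) = 0).
  { induction t as [|t IH]; intros Ht x Hx.
    - rewrite <- (Hsum x Hx), Nat.sub_0_r. apply sum_lt_ext. intros k _.
      rewrite Nat.add_0_r. reflexivity.
    - assert (Hlast : c (n - 1 - t)%nat = 0)
        by (rewrite <- (Hat_x0 t) by lia; apply IH; [lia | exact Hx0]).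
      assert (Htrunc : forall s, in_interval a b s ->
        sum_lt (n - S t) (fun k => c k * Derive_n y (k + t) s) = 0).
      { intros s Hs. rewrite <- (IH ltac:(lia) s Hs). replace (n - t)%nat with (S (n - S t)) by lia.
        simpl. replace (n - S t)%nat with (n - 1 - t)%nat by lia. rewrite Hlast. ring. }
      apply (is_derive_vanishing_on_interval a b _ x _ Htrunc Hx).
      apply is_derive_sum_lt. intros k Hk. apply is_derive_scal.
      replace (k + S t)%nat with (S (k + t)) by lia.
      apply Derive_correct, Hder; [lia | exact Hx]. }
  intros i Hi. replace i with (n - 1 - (n - 1 - i))%nat at 1 by lia.
  rewrite <- Hat_x0 by lia. apply Hshift; [lia | exact Hx0].
Qed.

(* The companion matrix of [y^(n) + coef_(n-1) y^(n-1) + ... + coef_0 y]: a shift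
   [Y_k' = Y_(k+1)] in the first [n - 1] rows, the equation itself in the last one. *)
Definition companion (n : nat) (coef : nat -> R -> R) (i j : nat) (x : R) : R :=
  if Nat.ltb (S i) n then (if Nat.eqb j (S i) then 1 else 0) else - coef j x.

Lemma lin_field_companion (n : nat) (coef : nat -> R -> R) (Y : nat -> R -> R) (i : nat) (x : R) :
  lin_field n (companion n coef) Y i x =
  if Nat.ltb (S i) n then Y (S i) x else - sum_lt n (fun j => coef j x * Y j x).
Proof.
  unfold lin_field, companion. destruct (Nat.ltb_spec (S i) n) as [Hi|Hi].
  - rewrite sum_lt_delta. destruct (Nat.ltb_spec (S i) n); [reflexivity | lia].
  - replace (- sum_lt n (fun j => coef j x * Y j x))
      with (sum_lt n (fun j => coef j x * Y j x) * -1) by ring.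
    rewrite <- sum_lt_mult_r. apply sum_lt_ext. intros; ring.
Qed.

Lemma continuous_companion (n : nat) (coef : nat -> R -> R) (a b : Rbar) :
  (forall j, (j < n)%nat -> forall x, in_interval a b x -> continuous (coef j) x) ->
  forall i j, (i < n)%nat -> (j < n)%nat -> forall x, in_interval a b x ->
    continuous (companion n coef i j) x.
Proof.
  intros Hc i j Hi Hj x Hx. unfold companion.
  destruct (Nat.ltb (S i) n); [apply continuous_const|].
  apply (continuous_opp (coef j)), Hc; assumption.
Qed.

Theorem theorem2p2 (n : nat) (a b : Rbar) (coef : nat -> R -> R) :
  (1 <= n)%nat ->
  Rbar_lt a b ->
  (forall i : nat, (i < n)%nat ->
     forall x : R, in_interval a b x -> continuous (coef i) x) ->
  exists y : R -> R,
    is_solution n coef a b y /\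
    lin_indep_on n (fun k => Derive_n y k) a b.
Proof.
  intros Hn Hab Hc.
  destruct (in_interval_nonempty a b Hab) as [x0 Hx0].
  destruct (linear_system_solution n (companion n coef) a b x0
              (fun k => if Nat.eqb k (n - 1) then 1 else 0) Hx0 (continuous_companion n coef a b Hc))
    as [Y [HYx0 HY]].
  set (dY := lin_field n (companion n coef) Y).
  assert (Hchain : forall k, (S k < n)%nat -> forall x, in_interval a b x -> dY k x = Y (S k) x).
  { intros k Hk x _. unfold dY. rewrite lin_field_companion.
    destruct (Nat.ltb_spec (S k) n); [reflexivity | lia]. }
  assert (HDn := Derive_n_chain a b n Y dY HY Hchain).
  assert (HdDn := is_derive_Derive_n_chain a b n Y dY HY Hchain).
  exists (Y 0%nat). split; [split|].
  - intros k Hk x Hx. eexists. apply HdDn; assumption.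
  - intros x Hx. replace n with (S (n - 1)) at 1 by lia. simpl.
    rewrite (is_derive_unique _ _ _ (HdDn (n - 1)%nat ltac:(lia) x Hx)).
    unfold dY. rewrite lin_field_companion.
    destruct (Nat.ltb_spec (S (n - 1)) n); [lia|].
    rewrite (sum_lt_ext n (fun i => coef i x * Derive_n (Y 0%nat) i x) (fun j => coef j x * Y j x));
      [ring | intros k Hk; rewrite HDn; auto].
  - apply (lin_indep_derivatives n a b (Y 0%nat) x0 Hx0).
    + intros k Hk x Hx. eexists. apply HdDn; [lia | exact Hx].
    + intros k Hk. rewrite HDn, HYx0; auto.
Qed.
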